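(* Let $\xi=(\tau_L,\delta_L,\tau_R,\delta_R)\in\Phi_{\rm BYG}$. Then $m_{\rm crit}>2\delta_R$.
   Context: Let $\Phi=\{\xi\in\mathbb{R}^4: \tau_L>\delta_L+1,\ \delta_L>0,\ \tau_R<-(\delta_R+1),\ \delta_R>0\}$. For $\xi\in\Phi$, the matrix $\begin{bmatrix}\tau_L&1\\-\delta_L&0\end{bmatrix}$ has real eigenvalues $0<\lambda_L^s<1<\lambda_L^u$. Let $\phi(\xi)=\delta_R-\left(\tau_R+\delta_L+\delta_R-(1+\tau_R)\lambda_L^u\right)\lambda_L^u$ and $\Phi_{\rm BYG}=\{\xi\in\Phi:\phi(\xi)>0\}$. Let $m_{\rm crit}=\lambda_L^s+\frac{2\tau_L}{(\lambda_L^u)^2-1}$. *)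

From Stdlib Require Import Reals Lra.
Open Scope R_scope.

Definition in_Phi (tL dL tR dR : R) : Prop :=
  tL > dL + 1 /\ dL > 0 /\ tR < - (dR + 1) /\ dR > 0.

(* Eigenvalues of [[tL, 1], [-dL, 0]]: roots of l^2 - tL l + dL = 0.
   For xi in Phi the discriminant is positive and 0 < lamLs < 1 < lamLu. *)
Definition lamLs (tL dL : R) : R := (tL - sqrt (tL ^ 2 - 4 * dL)) / 2.
Definition lamLu (tL dL : R) : R := (tL + sqrt (tL ^ 2 - 4 * dL)) / 2.

Definition phi (tL dL tR dR : R) : R :=
  dR - (tR + dL + dR - (1 + tR) * lamLu tL dL) * lamLu tL dL.

Definition in_Phi_BYG (tL dL tR dR : R) : Prop :=
  in_Phi tL dL tR dR /\ phi tL dL tR dR > 0.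

Definition m_crit (tL dL : R) : R :=
  lamLs tL dL + 2 * tL / (lamLu tL dL ^ 2 - 1).

(* Write u = lamLu and s = lamLs.  By Vieta, tL = u + s and dL = u s, so
   phi = (u - 1) (tR u - dR) + u^2 (1 - s).  Bounding tR by -(dR + 1), the
   condition phi > 0 becomes dR (u^2 - 1) < u - s u^2, and then
   (m_crit - 2 dR) (u^2 - 1) > s (u^2 - 1) + 2 (u + s) - 2 (u - s u^2)
   = s (3 u^2 + 1) > 0. *)
From Stdlib Require Import Reals Lra Psatz.
Open Scope R_scope.

Section LeftEigenvalues.

Variables tL dL : R.

Lemma discr_pos : 0 <= dL -> dL + 1 < tL -> 0 < tL ^ 2 - 4 * dL.
Proof.
  intros hd ht.
  (* tL^2 > (dL + 1)^2 = 4 dL + (dL - 1)^2 *)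
  assert (0 <= (dL - 1) ^ 2) by (apply pow2_ge_0).
  nra.
Qed.

Hypothesis hD : 0 <= tL ^ 2 - 4 * dL.

Let sqrt_discr_sq : sqrt (tL ^ 2 - 4 * dL) ^ 2 = tL ^ 2 - 4 * dL.
Proof. rewrite <- Rsqr_pow2. apply Rsqr_sqrt, hD. Qed.

Lemma lamLs_add_lamLu : lamLs tL dL + lamLu tL dL = tL.
Proof. unfold lamLs, lamLu. field. Qed.

Lemma lamLs_mul_lamLu : lamLs tL dL * lamLu tL dL = dL.
Proof.
  unfold lamLs, lamLu.
  replace ((tL - sqrt (tL ^ 2 - 4 * dL)) / 2 * ((tL + sqrt (tL ^ 2 - 4 * dL)) / 2))
    with ((tL ^ 2 - sqrt (tL ^ 2 - 4 * dL) ^ 2) / 4) by field.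
  rewrite sqrt_discr_sq. field.
Qed.

Lemma lamLs_le_lamLu : lamLs tL dL <= lamLu tL dL.
Proof.
  unfold lamLs, lamLu.
  pose proof (sqrt_pos (tL ^ 2 - 4 * dL)). lra.
Qed.

Lemma lamLs_gt0 : 0 < dL -> 0 < tL -> 0 < lamLs tL dL.
Proof.
  intros hd ht.
  pose proof lamLs_add_lamLu; pose proof lamLs_mul_lamLu; pose proof lamLs_le_lamLu.
  nra.
Qed.

(* (1 - lamLs) (1 - lamLu) = 1 - tL + dL < 0 separates the roots by 1. *)
Lemma lamLu_gt1 : 1 - tL + dL < 0 -> 1 < lamLu tL dL.
Proof.
  intros h1.
  pose proof lamLs_add_lamLu; pose proof lamLs_mul_lamLu; pose proof lamLs_le_lamLu.
  nra.
Qed.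

Lemma phi_lamL (tR dR : R) :
  phi tL dL tR dR =
  (lamLu tL dL - 1) * (tR * lamLu tL dL - dR)
  + lamLu tL dL ^ 2 * (1 - lamLs tL dL).
Proof.
  unfold phi.
  rewrite <- lamLs_mul_lamLu at 1.
  ring.
Qed.

End LeftEigenvalues.

Lemma phi_pos_bound (u s tR dR : R) :
  1 < u -> tR < - (dR + 1) ->
  0 < (u - 1) * (tR * u - dR) + u ^ 2 * (1 - s) ->
  dR * (u ^ 2 - 1) < u - s * u ^ 2.
Proof.
  intros hu htR hphi.
  assert (tR * (u * (u - 1)) < - (dR + 1) * (u * (u - 1))).
  { apply Rmult_lt_compat_r; [nra | exact htR]. }
  nra.
Qed.

Lemma m_crit_gt (u s dR : R) :
  1 < u -> 0 < s -> dR * (u ^ 2 - 1) < u - s * u ^ 2 ->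
  2 * dR < s + 2 * (s + u) / (u ^ 2 - 1).
Proof.
  intros hu hs hdR.
  assert (hu2 : 0 < u ^ 2 - 1) by nra.
  apply Rmult_lt_reg_r with (u ^ 2 - 1); [exact hu2 |].
  replace ((s + 2 * (s + u) / (u ^ 2 - 1)) * (u ^ 2 - 1))
    with (s * (u ^ 2 - 1) + 2 * (s + u)) by (field; lra).
  nra.
Qed.

Theorem lemma4p3 (tL dL tR dR : R) :
  in_Phi_BYG tL dL tR dR -> m_crit tL dL > 2 * dR.
Proof.
  intros [[htL [hdL [htR _]]] hphi].
  assert (hD : 0 <= tL ^ 2 - 4 * dL) by (apply Rlt_le, discr_pos; lra).
  rewrite (phi_lamL _ _ hD) in hphi.
  unfold m_crit. rewrite <- (lamLs_add_lamLu tL dL) at 2.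
  assert (hu : 1 < lamLu tL dL) by (apply lamLu_gt1; [exact hD | lra]).
  assert (hs : 0 < lamLs tL dL) by (apply lamLs_gt0; [exact hD | lra | lra]).
  apply m_crit_gt; [exact hu | exact hs |].
  apply phi_pos_bound with tR; [exact hu | exact htR | lra].
Qed.
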